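(* Let $N,s$ be integers with $N>2$ and $1\le s<N$. For $\lambda\in\left[\frac{\pi}{2}-\frac{\pi}{2N}s,\frac{\pi}{2}\right)$ let $C^0(s,\lambda):=\arcsin\left(\tan\left(\frac{\pi}{2}-\frac{\pi}{2N}s\right)/\tan\lambda\right)$ and $t^0(s,\lambda):=-\frac{N}{\pi}\beta(\lambda,C^0(s,\lambda))$, where $\beta(\lambda,\varphi)=\varphi-2\arctan\left(\frac{\cos\frac{\lambda}{2}\sin\varphi}{\sin\frac{\lambda}{2}+\cos\frac{\lambda}{2}\cos\varphi}\right)$ (as a real number). Then $t^0(s,-)$ is strictly decreasing, hence injective, on $\left[\frac{\pi}{2}-\frac{\pi}{2N}s,\frac{\pi}{2}\right)$, and its image of this interval is $(0,\frac{s}{2}]$.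
   Context: Explicitly, $\beta(\lambda,C^0(s,\lambda))=\arcsin\left(\cot\left(\frac{\pi}{2N}s\right)\cot\lambda\right)-2\arctan\left(\frac{\cos\frac{\lambda}{2}\cot\left(\frac{\pi}{2N}s\right)\cot\lambda}{\sqrt{1-\cot^2\left(\frac{\pi}{2N}s\right)\cot^2\lambda}\,\cos\frac{\lambda}{2}+\sin\frac{\lambda}{2}}\right)$. *)

From Stdlib Require Import Reals.
Open Scope R_scope.

Definition beta (lam phi : R) : R :=
  phi - 2 * atan (cos (lam / 2) * sin phi / (sin (lam / 2) + cos (lam / 2) * cos phi)).

Definition C0 (N s : nat) (lam : R) : R :=
  asin (tan (PI / 2 - PI / (2 * INR N) * INR s) / tan lam).

Definition t0 (N s : nat) (lam : R) : R :=
  - (INR N / PI) * beta lam (C0 N s lam).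

Definition lam_min (N s : nat) : R := PI / 2 - PI / (2 * INR N) * INR s.

(* Put [su = sin (lam/2)], [cu = cos (lam/2)].  Then [- beta lam phi] is the argument of
   [(su + cu e^(i phi))^2 e^(-i phi) = su^2 e^(-i phi) + 2 su cu + cu^2 e^(i phi)], whose real part
   [cos phi + sin lam] is positive and whose imaginary part is [sin phi cos lam].  Hence
   [- beta lam phi = atan (sin phi cos lam / (cos phi + sin lam))].  For [phi = C^0(s, lam)] we have
   [sin phi = K / T] with [K = tan lam_min] and [T = tan lam], and the argument of [atan] becomes
   [K / (T^2 + sqrt ((T^2 - K^2) (T^2 + 1)))].  Its denominator increases strictly from [K^2] to
   infinity on [T >= K], so [t^0 = N/pi * atan (...)] decreases from [N/pi * (pi/2 - lam_min) = s/2]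
   towards [0]; every intermediate value is attained because the denominator can be inverted
   explicitly. *)

From Stdlib Require Import Reals Lra Lia.
Open Scope R_scope.

(* [2 atan (y/x) - phi] is the argument of [(x + i y)^2 e^(-i phi)]; the two fractions on the
   right are its imaginary and real parts. *)
Lemma atan_double_sub (x y phi : R) :
  0 < x -> 0 <= y -> 0 <= phi <= PI / 2 ->
  0 < (x^2 - y^2) * cos phi + 2 * x * y * sin phi ->
  2 * atan (y / x) - phi =
  atan ((2 * x * y * cos phi - (x^2 - y^2) * sin phi) /
        ((x^2 - y^2) * cos phi + 2 * x * y * sin phi)).
Proof.
  intros Hx Hy Hphi HX.
  set (A := atan (y / x)).
  assert (HA : 0 <= A < PI / 2).
  { split; [|unfold A; pose proof (atan_bound (y / x)); lra].
    rewrite <- atan_0; destruct Hy as [Hy|<-].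
    - left; apply atan_increasing, Rdiv_lt_0_compat; lra.
    - right; unfold A; f_equal; field; lra. }
  assert (HcA : 0 < cos A) by (apply cos_gt_0; lra).
  assert (HsA : sin A = y / x * cos A).
  { rewrite <- (tan_atan (y / x)); fold A; unfold tan; field; lra. }
  assert (Hk : cos A ^ 2 * (x^2 + y^2) = x^2).
  { unfold A; rewrite cos_atan.
    set (r := sqrt (1 + (y / x)²)).
    assert (Hr : r * r = 1 + (y / x)²) by (apply sqrt_sqrt; unfold Rsqr; nra).
    assert (0 < r) by (apply sqrt_lt_R0; unfold Rsqr; nra).
    replace ((1 / r) ^ 2) with (/ (r * r)) by (field; lra).
    rewrite Hr; unfold Rsqr; field; nra. }
  set (k := cos A ^ 2 / x ^ 2).
  assert (Hk0 : 0 < k) by (unfold k; apply Rdiv_lt_0_compat; nra).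
  set (Theta := 2 * A - phi).
  assert (HsT : sin Theta = k * (2 * x * y * cos phi - (x^2 - y^2) * sin phi)).
  { unfold Theta, k; rewrite sin_minus, sin_2a, cos_2a, HsA; field; lra. }
  assert (HcT : cos Theta = k * ((x^2 - y^2) * cos phi + 2 * x * y * sin phi)).
  { unfold Theta, k; rewrite cos_minus, sin_2a, cos_2a, HsA; field; lra. }
  assert (HcT0 : 0 < cos Theta) by (rewrite HcT; nra).
  assert (HT : - (PI / 2) < Theta < PI / 2).
  { split.
    - destruct (Req_dec Theta (- (PI / 2))) as [E|E]; [|unfold Theta in *; lra].
      rewrite E, cos_neg, cos_PI2 in HcT0; lra.
    - destruct (Rlt_or_le Theta (PI / 2)) as [|E]; [assumption|].
      assert (cos Theta <= 0) by (apply cos_le_0; unfold Theta in *; lra); lra. }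
  rewrite <- (atan_tan Theta HT); f_equal.
  unfold tan; rewrite HsT, HcT; field; lra.
Qed.

Lemma asin_bound_nonneg (p : R) : 0 <= p <= 1 -> 0 <= asin p <= PI / 2.
Proof.
  intros Hp; pose proof (asin_bound p) as Hb; split; [|lra].
  destruct (Rle_or_lt 0 (asin p)) as [|Hneg]; [assumption|].
  assert (sin (asin p) < 0) by (apply sin_lt_0_var; lra).
  rewrite sin_asin in *; lra.
Qed.

Lemma opp_beta_asin (lam p : R) : 0 < lam < PI -> 0 <= p <= 1 ->
  - beta lam (asin p) = atan (p * cos lam / (sqrt (1 - p²) + sin lam)).
Proof.
  intros Hlam Hp.
  assert (Hsu : 0 < sin (lam / 2)) by (apply sin_gt_0; lra).
  assert (Hcu : 0 < cos (lam / 2)) by (apply cos_gt_0; lra).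
  assert (Hsl : 0 < sin lam) by (apply sin_gt_0; lra).
  assert (Hhalf : sin (lam / 2) ^ 2 + cos (lam / 2) ^ 2 = 1)
    by (rewrite <- (sin2_cos2 (lam / 2)); unfold Rsqr; ring).
  assert (Hsin : sin lam = 2 * sin (lam / 2) * cos (lam / 2))
    by (replace lam with (2 * (lam / 2)) at 1 by field; apply sin_2a).
  assert (Hcos : cos lam = cos (lam / 2) ^ 2 - sin (lam / 2) ^ 2)
    by (replace lam with (2 * (lam / 2)) at 1 by field; rewrite cos_2a; ring).
  set (c := sqrt (1 - p²)).
  assert (Hc0 : 0 <= c) by apply sqrt_pos.
  assert (Hcirc : c ^ 2 + p ^ 2 = 1)
    by (unfold c; simpl; rewrite Rmult_1_r, sqrt_sqrt; unfold Rsqr; nra).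
  set (su := sin (lam / 2)) in *; set (cu := cos (lam / 2)) in *.
  set (x := su + cu * c); set (y := cu * p).
  assert (HX : ((x ^ 2 - y ^ 2) * c + 2 * x * y * p) = c + sin lam).
  { rewrite Hsin; unfold x, y.
    transitivity (c * (su ^ 2 + cu ^ 2) + 2 * su * cu * (c ^ 2 + p ^ 2)
                  + cu ^ 2 * c * (c ^ 2 + p ^ 2 - 1)); [ring|rewrite Hhalf, Hcirc; ring]. }
  assert (HY : 2 * x * y * c - (x ^ 2 - y ^ 2) * p = p * cos lam).
  { rewrite Hcos; unfold x, y.
    transitivity (p * (cu ^ 2 - su ^ 2) + cu ^ 2 * p * (c ^ 2 + p ^ 2 - 1));
      [ring|rewrite Hcirc; ring]. }
  unfold beta; fold su cu.
  replace (- (asin p - 2 * atan (cu * sin (asin p) / (su + cu * cos (asin p)))))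
    with (2 * atan (y / x) - asin p)
    by (unfold x, y; rewrite sin_asin, cos_asin by lra; fold c; ring).
  rewrite atan_double_sub.
  all: try rewrite sin_asin, cos_asin by lra; fold c.
  - rewrite HX, HY; reflexivity.
  - unfold x; nra.
  - unfold y; nra.
  - now apply asin_bound_nonneg.
  - lra.
Qed.

Lemma tan_le (x y : R) : - (PI / 2) < x -> x <= y -> y < PI / 2 -> tan x <= tan y.
Proof.
  intros Hx Hxy Hy; destruct (Req_dec x y) as [->|Hne]; [lra|].
  left; apply tan_increasing; lra.
Qed.

Lemma atan_le (x y : R) : x <= y -> atan x <= atan y.
Proof.
  intros [Hxy| ->]; [left; apply atan_increasing|]; lra.
Qed.

Definition t0_denom (K T : R) : R := T ^ 2 + sqrt ((T ^ 2 - K ^ 2) * (T ^ 2 + 1)).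

Lemma opp_beta_asin_tan (K lam : R) : 0 < K -> 0 < lam < PI / 2 -> K <= tan lam ->
  - beta lam (asin (K / tan lam)) = atan (K / t0_denom K (tan lam)).
Proof.
  intros HK Hlam HKT.
  assert (Hco : 0 < cos lam) by (apply cos_gt_0; lra).
  assert (Hsi : sin lam = tan lam * cos lam) by (unfold tan; field; lra).
  assert (Hsec : cos lam ^ 2 * (tan lam ^ 2 + 1) = 1).
  { unfold tan; field_simplify; [|lra].
    rewrite <- (sin2_cos2 lam); unfold Rsqr; field. }
  set (T := tan lam) in *.
  assert (HT : 0 < T) by lra.
  assert (Hp : 0 < K / T <= 1).
  { split; [apply Rdiv_lt_0_compat; lra|].
    apply (Rmult_le_reg_r T); [lra|]; unfold Rdiv; rewrite Rmult_assoc, Rinv_l; lra. }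
  rewrite opp_beta_asin by lra.
  set (c := sqrt (1 - (K / T)²)).
  assert (Hc0 : 0 <= c) by apply sqrt_pos.
  assert (Hcc : c * c = 1 - (K / T)²) by (apply sqrt_sqrt; unfold Rsqr; nra).
  assert (Hroot : sqrt ((T ^ 2 - K ^ 2) * (T ^ 2 + 1)) = c * T / cos lam).
  { assert (0 <= T ^ 2 - K ^ 2) by nra.
    apply sqrt_lem_1; [apply Rmult_le_pos; nra| |].
    { apply Rmult_le_pos; [apply Rmult_le_pos|left; apply Rinv_0_lt_compat]; lra. }
    replace (c * T / cos lam * (c * T / cos lam)) with (c * c * T ^ 2 / cos lam ^ 2)
      by (field; lra).
    rewrite Hcc; unfold Rsqr; apply (Rmult_eq_reg_r (cos lam ^ 2)); [|nra].
    replace ((T ^ 2 - K ^ 2) * (T ^ 2 + 1) * cos lam ^ 2)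
      with ((T ^ 2 - K ^ 2) * (cos lam ^ 2 * (T ^ 2 + 1))) by ring.
    rewrite Hsec; field; lra. }
  unfold t0_denom; rewrite Hroot, Hsi; f_equal; field.
  assert (0 < T * cos lam) by nra; repeat split; nra.
Qed.

Lemma t0_denom_ge (K T : R) : 0 <= K <= T -> K ^ 2 <= t0_denom K T.
Proof.
  intros HKT; unfold t0_denom.
  pose proof (sqrt_pos ((T ^ 2 - K ^ 2) * (T ^ 2 + 1))); nra.
Qed.

Lemma t0_denom_increasing (K T1 T2 : R) :
  0 <= K <= T1 -> T1 < T2 -> t0_denom K T1 < t0_denom K T2.
Proof.
  intros HK HT; unfold t0_denom.
  assert (sqrt ((T1 ^ 2 - K ^ 2) * (T1 ^ 2 + 1)) <= sqrt ((T2 ^ 2 - K ^ 2) * (T2 ^ 2 + 1))).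
  { assert (0 <= T1 ^ 2 - K ^ 2 <= T2 ^ 2 - K ^ 2) by nra.
    apply sqrt_le_1_alt; nra. }
  nra.
Qed.

Lemma t0_denom_onto (K m : R) :
  0 < K -> K ^ 2 <= m -> exists T, K <= T /\ t0_denom K T = m.
Proof.
  intros HK Hm.
  (* Squaring [m - z = sqrt ((z - K^2) (z + 1))] makes the equation linear in [z = T^2]. *)
  set (z := (m ^ 2 + K ^ 2) / (2 * m + 1 - K ^ 2)).
  assert (Hden : 0 < 2 * m + 1 - K ^ 2) by nra.
  assert (Hz : z * (2 * m + 1 - K ^ 2) = m ^ 2 + K ^ 2) by (unfold z; field; lra).
  assert (HKz : K ^ 2 <= z) by nra.
  assert (Hzm : z <= m) by nra.
  exists (sqrt z).
  assert (HT : sqrt z ^ 2 = z) by (simpl; rewrite Rmult_1_r; apply sqrt_sqrt; nra).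
  split.
  - rewrite <- (sqrt_pow2 K) by lra; apply sqrt_le_1_alt; lra.
  - unfold t0_denom; rewrite HT, (sqrt_lem_1 _ (m - z)); [ring|nra|lra|nra].
Qed.

Definition opp_beta_C0 (a lam : R) : R := - beta lam (asin (tan a / tan lam)).

Lemma opp_beta_C0_eq (a lam : R) : 0 < a -> a <= lam -> lam < PI / 2 ->
  opp_beta_C0 a lam = atan (tan a / t0_denom (tan a) (tan lam)).
Proof.
  intros Ha Hal Hl; apply opp_beta_asin_tan; [apply tan_gt_0| |apply tan_le]; lra.
Qed.

Lemma opp_beta_C0_decreasing (a l1 l2 : R) :
  0 < a -> a <= l1 -> l1 < l2 -> l2 < PI / 2 -> opp_beta_C0 a l2 < opp_beta_C0 a l1.
Proof.
  intros Ha H1 H12 H2; rewrite !opp_beta_C0_eq by lra.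
  assert (HK : 0 < tan a) by (apply tan_gt_0; lra).
  assert (HKT : tan a <= tan l1) by (apply tan_le; lra).
  assert (Hd0 := t0_denom_ge (tan a) (tan l1) ltac:(lra)).
  assert (Hd : t0_denom (tan a) (tan l1) < t0_denom (tan a) (tan l2))
    by (apply t0_denom_increasing; [|apply tan_increasing]; lra).
  assert (0 < t0_denom (tan a) (tan l1)) by nra.
  apply atan_increasing, Rmult_lt_compat_l, Rinv_lt_contravar;
    [|apply Rmult_lt_0_compat|]; lra.
Qed.

Lemma opp_beta_C0_range (a lam : R) : 0 < a -> a <= lam -> lam < PI / 2 ->
  0 < opp_beta_C0 a lam <= PI / 2 - a.
Proof.
  intros Ha Hal Hl; rewrite opp_beta_C0_eq by lra.
  assert (HK : 0 < tan a) by (apply tan_gt_0; lra).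
  assert (Hd := t0_denom_ge (tan a) (tan lam) ltac:(split; [|apply tan_le]; lra)).
  assert (Hd0 : 0 < t0_denom (tan a) (tan lam)) by nra.
  split.
  - rewrite <- atan_0; apply atan_increasing, Rdiv_lt_0_compat; lra.
  - assert (Hend : atan (/ tan a) = PI / 2 - a) by (rewrite atan_inv, atan_tan; lra).
    rewrite <- Hend; apply atan_le.
    apply (Rmult_le_reg_r (tan a * t0_denom (tan a) (tan lam))); [nra|].
    field_simplify; nra.
Qed.

Lemma opp_beta_C0_onto (a th : R) : 0 < a < PI / 2 -> 0 < th <= PI / 2 - a ->
  exists lam, a <= lam /\ lam < PI / 2 /\ opp_beta_C0 a lam = th.
Proof.
  intros Ha Hth.
  assert (HK : 0 < tan a) by (apply tan_gt_0; lra).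
  assert (Hw : 0 < tan th) by (apply tan_gt_0; lra).
  assert (Hw1 : tan th <= / tan a).
  { rewrite <- (tan_atan (/ tan a)); apply tan_le; rewrite ?atan_inv, ?atan_tan; lra. }
  destruct (t0_denom_onto (tan a) (tan a / tan th)) as [T [HKT HT]]; [lra| |].
  { apply (Rmult_le_reg_r (tan th)); [lra|]; field_simplify; [|lra].
    apply (Rmult_le_compat_l (tan a)) in Hw1; [|lra].
    rewrite Rinv_r in Hw1 by lra; nra. }
  exists (atan T); pose proof (atan_bound T).
  assert (Ea : a = atan (tan a)) by (rewrite atan_tan; lra).
  split; [|split]; [rewrite Ea; apply atan_le; lra|lra|].
  rewrite opp_beta_C0_eq, tan_atan, HT; [|lra|rewrite Ea; apply atan_le; lra|lra].
  replace (tan a / (tan a / tan th)) with (tan th) by (field; lra).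
  apply atan_tan; lra.
Qed.

Lemma lam_min_bounds (N s : nat) : (0 < s)%nat -> (s < N)%nat -> 0 < lam_min N s < PI / 2.
Proof.
  intros Hs HsN; unfold lam_min.
  assert (0 < INR s) by (apply lt_0_INR; lia).
  assert (INR s < INR N) by (apply lt_INR; lia).
  assert (Hq : 0 < INR s / INR N < 1).
  { split; [apply Rdiv_lt_0_compat|apply (Rmult_lt_reg_r (INR N)); field_simplify]; lra. }
  replace (PI / (2 * INR N) * INR s) with (PI / 2 * (INR s / INR N)) by (field; lra).
  pose proof PI_RGT_0; nra.
Qed.

Lemma lam_min_scale (N s : nat) : (0 < N)%nat ->
  INR N / PI * (PI / 2 - lam_min N s) = INR s / 2.
Proof.
  intros HN; assert (0 < INR N) by (apply lt_0_INR; lia).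
  pose proof PI_RGT_0; unfold lam_min; field; lra.
Qed.

Lemma t0_opp_beta_C0 (N s : nat) (lam : R) :
  t0 N s lam = INR N / PI * opp_beta_C0 (lam_min N s) lam.
Proof. unfold t0, C0, opp_beta_C0, lam_min; ring. Qed.

Theorem lemma25 (N s : nat) (hN : (2 < N)%nat) (hs1 : (1 <= s)%nat) (hsN : (s < N)%nat) :
  (forall l1 l2 : R,
      lam_min N s <= l1 -> l1 < l2 -> l2 < PI / 2 ->
      t0 N s l2 < t0 N s l1)
  /\
  (forall y : R,
      (exists l : R, lam_min N s <= l /\ l < PI / 2 /\ t0 N s l = y)
      <-> (0 < y /\ y <= INR s / 2)).
Proof.
  assert (Ha := lam_min_bounds N s ltac:(lia) hsN).
  assert (Hscale := lam_min_scale N s ltac:(lia)).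
  assert (HN : 0 < INR N) by (apply lt_0_INR; lia).
  assert (Hpi := PI_RGT_0).
  assert (Hc : 0 < INR N / PI) by (apply Rdiv_lt_0_compat; lra).
  split; [|intros y; split].
  - intros l1 l2 H1 H12 H2; rewrite !t0_opp_beta_C0.
    apply Rmult_lt_compat_l; [|apply opp_beta_C0_decreasing]; lra.
  - intros [l [H1 [H2 <-]]]; rewrite t0_opp_beta_C0, <- Hscale.
    destruct (opp_beta_C0_range (lam_min N s) l) as [Hb0 Hb1]; try lra.
    split; [apply Rmult_lt_0_compat|apply Rmult_le_compat_l]; lra.
  - intros [Hy0 Hy1].
    assert (Hth : 0 < PI / INR N * y <= PI / 2 - lam_min N s).
    { split; [apply Rmult_lt_0_compat; [apply Rdiv_lt_0_compat|]; lra|].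
      apply (Rmult_le_reg_l (INR N / PI)); [lra|]; rewrite Hscale.
      field_simplify; lra. }
    destruct (opp_beta_C0_onto (lam_min N s) (PI / INR N * y)) as [l [H1 [H2 Hl]]];
      [lra|lra|].
    exists l; rewrite t0_opp_beta_C0, Hl; repeat split; try lra.
    field; lra.
Qed.
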